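(* Let $\rho:\Gamma\to GL_d(\mathbb{C})$ be an irreducible representation of dimension $d\le4$, and assume the eigenvalues of $\rho(T)$ (with multiplicity) are $\mathbf{e}(r_1),\dots,\mathbf{e}(r_d)$ for real numbers $r_1,\dots,r_d$. Then $12(r_1+\cdots+r_d)$ is an integer divisible by $d$.
   Context: $\Gamma=SL(2,\mathbb{Z})$, $T=\begin{pmatrix}1&1\\0&1\end{pmatrix}$, $\mathbf{e}(r)=e^{2\pi ir}$. *)

From HB Require Import structures.
From mathcomp Require Import all_boot all_order all_algebra.
From mathcomp Require Import all_classical all_reals.
From mathcomp Require Import trigo.
From mathcomp Require Import complex.
Set Implicit Arguments. Unset Strict Implicit. Unset Printing Implicit Defensive.
Import Order.TTheory GRing.Theory Num.Theory.
Local Open Scope ring_scope.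

(* Gamma = SL(2,Z) as the set of 2x2 integer matrices of determinant 1. *)
Definition SL2Z (A : 'M[int]_2) : Prop := \det A = 1.

Definition Tmat : 'M[int]_2 := \matrix_(i < 2, j < 2) (if (i <= j)%N then 1 else 0).

Definition ee (R : realType) (r : R) : R[i] :=
  Complex (cos (2 * pi * r)) (sin (2 * pi * r)).

Definition is_rep (R : realType) (d : nat) (rho : 'M[int]_2 -> 'M[R[i]]_d) : Prop :=
  rho 1%:M = 1%:M /\
  (forall A B, SL2Z A -> SL2Z B -> rho (A *m B) = rho A *m rho B).

(* Irreducible: d > 0 and the only rho(Gamma)-stable subspaces of C^d
   (row spaces of matrices) are 0 and the whole space. *)
Definition irreducible_rep (R : realType) (d : nat) (rho : 'M[int]_2 -> 'M[R[i]]_d) : Prop :=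
  (0 < d)%N /\
  forall U : 'M[R[i]]_d,
    (forall A, SL2Z A -> stablemx U (rho A)) -> (U == 0) || row_full U.

(* SL2(Z) is generated by S = [[0,-1],[1,0]] and R = [[0,-1],[1,1]], with
   S^2 = R^3 = -1 and T = S^3 R.  By Schur's lemma rho(-1) is a scalar e with
   e^2 = 1, so rho(S) and rho(R) are diagonalizable with eigenvalues among
   +-sqrt e and e, e w, e w^2 (w a primitive cube root of unity).  For d > 1
   irreducibility forbids a common eigenvector, so the multiplicity of an
   eigenvalue of rho(S) plus that of an eigenvalue of rho(R) is at most d.
   For d = 3 this forces the eigenvalues of rho(R) to be distinct, hence
   det rho(R) = e; for d = 4 it forces +-sqrt e to be eigenvalues of rho(S) of
   multiplicity 2 each, hence det rho(S) = 1.  Together with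
   det rho(S)^2 = det rho(R)^3 = e^d this gives det rho(T)^(12/d) = 1 for
   every d <= 4, and det rho(T) = e(r_1 + ... + r_d). *)

From HB Require Import structures.
From mathcomp Require Import all_boot all_order all_algebra.
From mathcomp Require Import all_classical all_reals.
From mathcomp Require Import trigo complex.
From mathcomp Require Import ring lra zify.
Set Implicit Arguments.
Unset Strict Implicit.
Unset Printing Implicit Defensive.

Import Order.TTheory GRing.Theory Num.Theory.
Local Open Scope ring_scope.

(** * Multiplicities in sequences *)

Section CountMem.
Variable T : eqType.
Implicit Types rs s : seq T.

Lemma sum_count_mem rs s : uniq rs -> {subset s <= rs} ->
  (\sum_(x <- rs) count_mem x s)%N = size s.
Proof.
move=> rs_uniq; elim: s => [_|y s IHs /allP/andP[y_rs /allP s_rs]] /=.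
  by rewrite big1.
rewrite big_split /= IHs // addnC -addn1; congr (_ + _)%N.
by rewrite (bigD1_seq y) //= eqxx big1_seq // => x /andP[+ _]; rewrite eq_sym => /negPf ->.
Qed.

Lemma prod_count_mem (R : comPzSemiRingType) rs s (F : T -> R) :
  uniq rs -> {subset s <= rs} ->
  \prod_(x <- rs) F x ^+ count_mem x s = \prod_(x <- s) F x.
Proof.
move=> rs_uniq; elim: s => [_|y s IHs /allP/andP[y_rs /allP s_rs]].
  by rewrite big_nil big1 // => x _; rewrite expr0.
rewrite big_cons -IHs //; under eq_bigr do rewrite /= exprD.
rewrite big_split /=; congr (_ * _).
rewrite (bigD1_seq y) //= eqxx expr1 big1_seq ?mulr1 // => x /andP[+ _].
by rewrite eq_sym => /negPf ->.
Qed.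

Lemma sum_const_seq rs k : (\sum_(x <- rs) k)%N = (k * size rs)%N.
Proof. by rewrite big_const_seq count_predT iter_addn_0. Qed.

Lemma count_mem_pigeonhole rs s k : uniq rs -> {subset s <= rs} ->
  (k * size rs < size s)%N -> exists2 x, x \in rs & (k < count_mem x s)%N.
Proof.
move=> rs_uniq s_sub; rewrite -(sum_count_mem rs_uniq s_sub) -sum_const_seq => k_lt.
apply/hasP; apply: contraTT k_lt; rewrite -all_predC => /allP le_k.
rewrite -leqNgt big_seq [X in (_ <= X)%N]big_seq; apply: leq_sum => x /le_k.
by rewrite /= -leqNgt.
Qed.

Lemma count_mem_saturated rs s k : uniq rs -> {subset s <= rs} ->
  (forall x, count_mem x s <= k)%N -> size s = (k * size rs)%N ->
  {in rs, forall x, count_mem x s = k}.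
Proof.
move=> rs_uniq s_sub le_k size_s.
have : (\sum_(x <- rs) (k - count_mem x s) == 0)%N.
  by rewrite sumnB // sum_count_mem // sum_const_seq size_s subnn.
rewrite sum_nat_seq_eq0 => /allP k_count x /k_count /=.
by rewrite subn_eq0 => k_le; apply/eqP; rewrite eqn_leq le_k.
Qed.

End CountMem.

(** * Diagonalizable matrices *)

Lemma det_mxX (R : comNzRingType) n (A : 'M[R]_n.+1) k : \det (A ^+ k) = \det A ^+ k.
Proof.
elim: k => [|k IHk]; first by rewrite !expr0 det1.
by rewrite !exprS -mulmxE det_mulmx IHk.
Qed.

Section Spectrum.
Variable F : fieldType.

(* [ev] is the diagonal of a diagonal form of [A], listed with multiplicity. *)
Definition spectrum_of n (A : 'M[F]_n) (ev : seq F) : Prop :=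
  [/\ size ev = n, \det A = \prod_(x <- ev) x &
      forall x, (count_mem x ev <= \rank (eigenspace A x))%N].

Lemma rank_rowsub_unit n k (f : 'I_k -> 'I_n) (P : 'M[F]_n) :
  injective f -> P \in unitmx -> \rank (rowsub f P) = k.
Proof.
move=> f_inj P_unit; rewrite rowsubE mxrankMfree ?row_free_unit //.
apply/eqP/row_freeP; exists (rowsub f 1%:M)^T.
apply/matrixP => i j; rewrite mul_rowsub_mx mul1mx !mxE.
by rewrite (inj_eq f_inj) eq_sym.
Qed.

Lemma diag_mx_spectrum n (A P : 'M[F]_n) (D : 'rV[F]_n) :
  P \in unitmx -> P *m A = diag_mx D *m P ->
  spectrum_of A [seq D 0 i | i <- enum 'I_n].
Proof.
move=> P_unit PA; split; first by rewrite size_map size_enum_ord.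
  have detP_neq0 : \det P != 0 by rewrite -unitfE -unitmxE.
  apply: (mulIf detP_neq0); rewrite mulrC -det_mulmx PA det_mulmx det_diag.
  by rewrite big_map big_enum.
move=> x; pose S := [pred i | D 0 i == x].
have -> : count_mem x [seq D 0 i | i <- enum 'I_n] = #|S|.
  rewrite count_map cardE /enum_mem size_filter count_filter.
  by apply: eq_count => i; rewrite !inE andbT.
rewrite -(rank_rowsub_unit (@enum_val_inj _ S) P_unit); apply/mxrankS/eigenspaceP.
rewrite mul_rowsub_mx PA mul_diag_mx; apply/matrixP => i j; rewrite !mxE.
by have /eqP -> := enum_valP i.
Qed.

Lemma diagonal_entry_root n (A P : 'M[F]_n.+1) (D : 'rV[F]_n.+1) i p :
  P \in unitmx -> P *m A = diag_mx D *m P -> horner_mx A p = 0 -> root p (D 0 i).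
Proof.
move=> P_unit PA pA0; apply: root_dvdp (mxminpoly_min pA0) _.
rewrite -eigenvalue_root_min; apply/eigenvalueP; exists (row i P).
  by rewrite -row_mul PA mul_diag_mx; apply/rowP => j; rewrite !mxE.
apply: contraTneq P_unit => Pi0; rewrite -row_free_unit; apply/negP => /row_freeP[Q].
move/(congr1 (row i)); rewrite row_mul Pi0 mul0mx => /rowP/(_ i).
by rewrite !mxE eqxx => /eqP; rewrite eq_sym oner_eq0.
Qed.

Lemma diagonalizable_spectrum n (A : 'M[F]_n.+1) (rs : seq F) :
  uniq rs -> horner_mx A (\prod_(x <- rs) ('X - x%:P)) = 0 ->
  exists2 ev, {subset ev <= rs} & spectrum_of A ev.
Proof.
move=> rs_uniq pA0.
have [|P P_unit /diagonalizable_forPex[D /(simmxP P_unit) PA]] := proj2 (diagonalizableP A).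
  by exists rs => //; apply: mxminpoly_min.
exists [seq D 0 i | i <- enum 'I_n.+1]; last exact: diag_mx_spectrum P_unit PA.
move=> _ /mapP[i _ ->]; rewrite -root_prod_XsubC.
exact: diagonal_entry_root P_unit PA pA0.
Qed.

Lemma det_char_poly_roots n (A : 'M[F]_n) (x : 'I_n -> F) :
  char_poly A = \prod_i ('X - (x i)%:P) -> \det A = \prod_i x i.
Proof.
move=> charA; have sign_neq0 : (-1 : F) ^+ n != 0 by rewrite expf_neq0 ?oppr_eq0 ?oner_eq0.
apply: (mulfI sign_neq0); rewrite -char_poly_det charA -horner_coef0 horner_prod.
under eq_bigr do rewrite hornerXsubC sub0r.
by rewrite prodrN card_ord.
Qed.

Lemma horner_mx_XnsubC n (A : 'M[F]_n.+1) k a :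
  horner_mx A ('X^k - a%:P) = A ^+ k - a%:M.
Proof. by rewrite rmorphB rmorphXn /= horner_mx_X horner_mx_C. Qed.

End Spectrum.

Lemma prod_XsubC_opp (R : comNzRingType) (l : R) :
  \prod_(x <- [:: l; - l]) ('X - x%:P) = 'X^2 - (l ^+ 2)%:P.
Proof. by rewrite !big_cons big_nil polyCN rmorphXn /=; ring. Qed.

Lemma prod_XsubC_cube_roots (R : comNzRingType) (c w : R) :
  w ^+ 2 + w + 1 = 0 ->
  \prod_(x <- [:: c; c * w; c * w ^+ 2]) ('X - x%:P) = 'X^3 - (c ^+ 3)%:P.
Proof.
move=> w_root; apply/eqP; rewrite -subr_eq0; apply/eqP.
pose W := w ^+ 2 + w + 1.
transitivity (W%:P * ((c ^+ 2 * w)%:P * 'X - c%:P * 'X^2 - (c ^+ 3 * (w - 1))%:P)).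
  by rewrite /W !big_cons big_nil !(rmorphB, rmorphD, rmorphM, rmorph1) /=; ring.
by rewrite /W w_root mul0r.
Qed.

Section ClosedField.
Variable C : numClosedFieldType.
Implicit Types (c e w : C).

Definition omega : C := (-1 + sqrtC (-3)) / 2.

Lemma omega_root : omega ^+ 2 + omega + 1 = 0.
Proof.
have -> : omega ^+ 2 + omega + 1 = (sqrtC (-3) ^+ 2 + 3) / 4 by rewrite /omega; field.
by rewrite sqrtCK addNr mul0r.
Qed.

Lemma omega3 : omega ^+ 3 = 1.
Proof.
apply/eqP; rewrite -subr_eq0; apply/eqP.
by rewrite -(mulr0 (omega - 1)) -omega_root; ring.
Qed.

Lemma uniq_opp_roots c : c != 0 -> uniq [:: c; - c].
Proof.
move=> c_neq0; rewrite /= inE andbT -subr_eq0 opprK -mulr2n.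
by rewrite mulrn_eq0 negb_or.
Qed.

Lemma uniq_cube_roots c w : c != 0 -> w ^+ 2 + w + 1 = 0 ->
  uniq [:: c; c * w; c * w ^+ 2].
Proof.
move=> c_neq0 w_root; have three_neq0 : (3 : C) != 0 by rewrite pnatr_eq0.
rewrite /= !inE negb_or andbT -{1 3}[c]mulr1 !(inj_eq (mulfI c_neq0)).
rewrite -andbA; apply/and3P; split; apply/eqP => w_eq.
- by move/eqP: three_neq0; apply; rewrite -w_root -w_eq; ring.
- move/eqP: three_neq0; apply.
  have -> : (3 : C) = (w ^+ 2 - 1) - (w ^+ 2 + w + 1 - (w ^+ 2 - 1)) * (w - 2) by ring.
  by rewrite w_root -w_eq; ring.
- move/eqP: three_neq0; apply.
  have -> : (3 : C) = 4 * (w ^+ 2 + w + 1) - (w ^+ 2 + w + 1 - (w ^+ 2 - w)) ^+ 2 by ring.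
  by rewrite w_root -w_eq; ring.
Qed.

Lemma sqrt_spectrum n (A : 'M[C]_n.+1) e : e != 0 -> A ^+ 2 = e%:M ->
  exists2 ev, {subset ev <= [:: sqrtC e; - sqrtC e]} & spectrum_of A ev.
Proof.
move=> e_neq0 A2; apply: diagonalizable_spectrum.
  by apply: uniq_opp_roots; rewrite sqrtC_eq0.
by rewrite prod_XsubC_opp horner_mx_XnsubC sqrtCK A2 subrr.
Qed.

Lemma cube_spectrum n (A : 'M[C]_n.+1) c : c != 0 -> A ^+ 3 = (c ^+ 3)%:M ->
  exists2 ev, {subset ev <= [:: c; c * omega; c * omega ^+ 2]} & spectrum_of A ev.
Proof.
move=> c_neq0 A3; apply: diagonalizable_spectrum.
  exact: uniq_cube_roots c_neq0 omega_root.
by rewrite (prod_XsubC_cube_roots _ omega_root) horner_mx_XnsubC A3 subrr.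
Qed.

Lemma rank_eigenspaces_irreducible n (s t : 'M[C]_n) a b : (1 < n)%N ->
  (forall U : 'M_n, stablemx U s -> stablemx U t -> (U == 0) || row_full U) ->
  (\rank (eigenspace s a) + \rank (eigenspace t b) <= n)%N.
Proof.
move=> n_gt1 irr; rewrite leqNgt; apply/negP => rank_gt.
pose U := (eigenspace s a :&: eigenspace t b)%MS.
have U_neq0 : U != 0.
  rewrite -mxrank_eq0 -lt0n; move: rank_gt; rewrite -mxrank_sum_cap.
  by have := rank_leq_col (eigenspace s a + eigenspace t b)%MS; rewrite /U; lia.
have stable_eigenspace (A V : 'M[C]_n) x : (V <= eigenspace A x)%MS -> stablemx V A.
  by move/eigenspaceP => ->; rewrite scalemx_sub.
have /orP[U0|] := irr U (stable_eigenspace _ _ _ (capmxSl _ _))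
  (stable_eigenspace _ _ _ (capmxSr _ _)); first by rewrite U0 in U_neq0.
rewrite -sub1mx => U_full.
have /eigenspaceP := submx_trans U_full (capmxSl _ _); rewrite mul1mx scalemx1 => s_a.
have /eigenspaceP := submx_trans U_full (capmxSr _ _); rewrite mul1mx scalemx1 => t_b.
rewrite {}s_a {}t_b in irr.
pose i0 := Ordinal (ltnW n_gt1).
have /orP[] := irr (delta_mx i0 i0) (stablemxC _ _) (stablemxC _ _).
  by move/eqP/matrixP/(_ i0 i0); rewrite !mxE eqxx => /eqP; rewrite oner_eq0.
by rewrite /row_full mxrank_delta => /eqP; lia.
Qed.

End ClosedField.

Arguments omega {C}.
Arguments omega_root {C}.
Arguments omega3 {C}.

(** * SL2(Z) is generated by S and R *)

Definition M2 (a b c e : int) : 'M[int]_2 :=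
  \matrix_(i < 2, j < 2)
    if i == 0 :> nat then (if j == 0 :> nat then a else b)
    else (if j == 0 :> nat then c else e).

Lemma M2_entries (A : 'M[int]_2) : A = M2 (A 0 0) (A 0 1) (A 1 0) (A 1 1).
Proof.
apply/matrixP => i j; rewrite mxE.
by case: i => [[|[|//]] ?]; case: j => [[|[|//]] ?] /=; congr (A _ _); apply: val_inj.
Qed.

Lemma M2_mul a b c e a' b' c' e' :
  M2 a b c e *m M2 a' b' c' e' =
  M2 (a * a' + b * c') (a * b' + b * e') (c * a' + e * c') (c * b' + e * e').
Proof.
apply/matrixP => i j; rewrite !mxE !big_ord_recl big_ord0 !mxE /=.
by case: i => [[|[|//]] ?]; case: j => [[|[|//]] ?]; rewrite /= addr0.
Qed.

Lemma det_M2 a b c e : \det (M2 a b c e) = a * e - b * c.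
Proof.
rewrite (expand_det_row _ 0) !big_ord_recl big_ord0 /cofactor !det_mx11 !mxE /=.
by rewrite /bump /=; ring.
Qed.

Lemma M2_scalar a : M2 a 0 0 a = a%:M.
Proof.
by apply/matrixP => i j; rewrite !mxE; case: i => [[|[|//]] ?]; case: j => [[|[|//]] ?].
Qed.

Lemma SL2Z_M2 a b c e : SL2Z (M2 a b c e) <-> a * e - b * c = 1.
Proof. by rewrite /SL2Z det_M2. Qed.

Lemma SL2Z_mul A B : SL2Z A -> SL2Z B -> SL2Z (A *m B).
Proof. by rewrite /SL2Z det_mulmx => -> ->; rewrite mulr1. Qed.

Definition Smat : 'M[int]_2 := M2 0 (-1) 1 0.
Definition Rmat : 'M[int]_2 := M2 0 (-1) 1 1.
Definition Tpow (z : int) : 'M[int]_2 := M2 1 z 0 1.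

Ltac M2_ring := rewrite /Smat /Rmat /Tpow ?M2_mul; congr M2; ring.

Lemma Tmat_Tpow : Tmat = Tpow 1.
Proof.
by apply/matrixP => i j; rewrite !mxE; case: i => [[|[|//]] ?]; case: j => [[|[|//]] ?].
Qed.

Lemma TpowD y z : Tpow (y + z) = Tpow y *m Tpow z.
Proof. by M2_ring. Qed.

Lemma Smat2 : Smat *m Smat = (-1)%:M.
Proof. by rewrite -M2_scalar; M2_ring. Qed.

Lemma Rmat3 : Rmat *m Rmat *m Rmat = (-1)%:M.
Proof. by rewrite -M2_scalar; M2_ring. Qed.

Lemma Tmat_SR : Tmat = Smat *m Smat *m Smat *m Rmat.
Proof. by rewrite Tmat_Tpow; M2_ring. Qed.

Lemma TpowN1_SR : Tpow (-1) = Rmat *m Rmat *m Rmat *m Rmat *m Rmat *m Smat.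
Proof. by M2_ring. Qed.

Lemma SL2Z_Smat : SL2Z Smat. Proof. by apply/SL2Z_M2; ring. Qed.
Lemma SL2Z_Rmat : SL2Z Rmat. Proof. by apply/SL2Z_M2; ring. Qed.

#[local] Hint Resolve SL2Z_Smat SL2Z_Rmat SL2Z_mul : core.

Section Generation.
Variable P : 'M[int]_2 -> Prop.
Hypotheses (PS : P Smat) (PR : P Rmat).
Hypothesis PM : forall A B, SL2Z A -> SL2Z B -> P A -> P B -> P (A *m B).

Let Q A := SL2Z A /\ P A.

Let QM A B : Q A -> Q B -> Q (A *m B).
Proof. by move=> [SA PA] [SB PB]; split; [apply: SL2Z_mul | apply: PM]. Qed.

Let QS : Q Smat. Proof. by split; [apply: SL2Z_Smat|]. Qed.
Let QR : Q Rmat. Proof. by split; [apply: SL2Z_Rmat|]. Qed.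

Let Q_Tpow z : Q (Tpow z).
Proof.
have QT1 : Q (Tpow 1) by rewrite -Tmat_Tpow Tmat_SR; repeat (apply: QM => //).
have QTN1 : Q (Tpow (-1)) by rewrite TpowN1_SR; repeat (apply: QM => //).
have QT0 : Q (Tpow 0) by rewrite -(subrr 1) TpowD; apply: QM.
case: z => n; last rewrite NegzE; elim: n => [|n IHn] //.
  by rewrite -addn1 PoszD TpowD; apply: QM.
by rewrite -addn1 PoszD opprD TpowD; apply: QM.
Qed.

Lemma SL2Z_ind A : SL2Z A -> P A.
Proof.
suff QA k : (absz (A 1%R 0%R) < k)%N -> SL2Z A -> Q A by move=> /(QA _ (ltnSn _))[].
elim: k A => // k IHk A; rewrite ltnS.
move: (M2_entries A); move: (A 0 0) (A 0 1) (A 1 0) (A 1 1) => a b c e ->.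
move=> + /SL2Z_M2 detA.
have [c0 _|c_neq0 c_le] := eqVneq c 0.
  rewrite c0 mulr0 subr0 in detA *.
  have /eqP : (absz a * absz e = 1)%N by rewrite -abszM detA.
  rewrite muln_eq1 => /andP[/eqP a_unit /eqP e_unit].
  have [[-> ->]|[-> ->]] : a = 1 /\ e = 1 \/ a = -1 /\ e = -1 by nia.
    exact: Q_Tpow.
  have -> : M2 (-1) b 0 (-1) = Smat *m Smat *m Tpow (- b) by M2_ring.
  by repeat (apply: QM => //).
(* one step of the Euclidean algorithm on the first column *)
pose q := (a %/ c)%Z; pose r := (a %% c)%Z.
have a_def : a = q * c + r by apply: divz_eq.
have -> : M2 a b c e = Tpow q *m (Smat *m Smat *m Smat *m M2 (- c) (- e) r (b - q * e)).
  by rewrite a_def; M2_ring.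
apply: QM => //; apply: QM; first by repeat (apply: QM => //).
apply: IHk; last by apply/SL2Z_M2; rewrite a_def in detA; lia.
have := ltz_mod a c_neq0; have := modz_ge0 a c_neq0.
by rewrite /M2 mxE /= -/r; lia.
Qed.

End Generation.

(** * The character e *)

Section Character.
Variable R : realType.
Implicit Types x y : R.

Lemma ee0 : ee (0 : R) = 1.
Proof. by rewrite /ee mulr0 cos0 sin0. Qed.

Lemma eeD x y : ee (x + y) = ee x * ee y.
Proof. by rewrite /ee mulrDr cosD sinD /=; congr Complex; ring. Qed.

Lemma eeMn x k : ee (x *+ k) = ee x ^+ k.
Proof. by elim: k => [|k IHk]; rewrite ?ee0 // mulrS exprS eeD IHk. Qed.

Lemma ee_sum (I : Type) (s : seq I) (F : I -> R) :
  ee (\sum_(i <- s) F i) = \prod_(i <- s) ee (F i).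
Proof. exact: (big_morph (@ee R) eeD ee0). Qed.

Lemma ee_int (m : int) : ee (m%:~R : R) = 1.
Proof.
have ee_nat k : ee (k%:R : R) = 1.
  by rewrite eeMn /ee mulr1 mulr_natl cos2pi sin2pi expr1n.
case: m => k; first exact: ee_nat.
have : ee (- (k.+1%:R : R)) * ee k.+1%:R = 1 by rewrite -eeD addNr ee0.
by rewrite NegzE ee_nat mulr1 rmorphN.
Qed.

Lemma ee_eq1 x : ee x = 1 -> exists m : int, x = m%:~R.
Proof.
move=> eex1; exists (Num.floor x); apply/eqP; rewrite -subr_eq0; apply/eqP.
set y := x - _.
have y_ge0 : 0 <= y by rewrite subr_ge0 floor_le.
have y_lt1 : y < 1 by rewrite ltrBlDl -[1]/(1%:~R) -rmorphD floorD1_gt.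
have : ee y = 1 by rewrite eeD eex1 mul1r -rmorphN ee_int.
rewrite /ee => -[cos1 _].
(* cos (2 pi y) = 1 - 2 sin (pi y)^2, and sin > 0 on (0, pi) *)
have sin0 : sin (pi * y) = 0.
  move: cos1; rewrite -mulrA mulr_natl cos_mulr2n cos2sin2 => /eqP.
  rewrite -subr_eq0 => /eqP h.
  by apply/eqP; rewrite -sqrf_eq0; apply/eqP; lra.
apply/eqP; rewrite eq_le y_ge0 andbT leNgt; apply/negP => y_gt0.
have pi_gt0 := @pi_gt0 R.
have : 0 < sin (pi * y) by apply: sin_gt0_pi; apply/andP; split; nra.
by rewrite sin0 ltxx.
Qed.

End Character.

(** * Representations of SL2(Z) *)

Section Representation.
Variables (R : realType) (n : nat) (rho : 'M[int]_2 -> 'M[R[i]]_n.+1).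
Hypotheses (rho_rep : is_rep rho) (rho_irr : irreducible_rep rho).

Let rhoM A B : SL2Z A -> SL2Z B -> rho (A *m B) = rho A *m rho B.
Proof. exact: rho_rep.2. Qed.

Let SL2Z_N1 : SL2Z (-1)%:M.
Proof. by rewrite /SL2Z det_scalar expr2 mulN1r opprK. Qed.

Lemma irreducible_SR (U : 'M_n.+1) :
  stablemx U (rho Smat) -> stablemx U (rho Rmat) -> (U == 0) || row_full U.
Proof.
move=> US UR; apply: rho_irr.2; apply: SL2Z_ind => // A B SA SB UA UB.
by rewrite rhoM //; apply: stablemxM.
Qed.

(* Schur's lemma for the central element -1 *)
Lemma rho_N1_scalar : exists e, rho (-1)%:M = e%:M.
Proof.
have [a] := eigenvalue_closed (rho (-1)%:M) (ltn0Sn n).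
rewrite /eigenvalue => a_neq0; exists a.
have N1_comm A : SL2Z A -> comm_mx (rho (-1)%:M) (rho A).
  by move=> SA; rewrite /comm_mx -!rhoM // scalar_mxC.
have /orP[/eqP a0|] := rho_irr.2 _ (fun A SA => comm_mx_stable_eigenspace a (N1_comm A SA)).
  by rewrite a0 eqxx in a_neq0.
by rewrite -sub1mx => /eigenspaceP; rewrite mul1mx scalemx1.
Qed.

Variable e : R[i].
Hypothesis rho_N1 : rho (-1)%:M = e%:M.

Lemma sqr_e : e ^+ 2 = 1.
Proof.
have : (e ^+ 2)%:M = 1%:M :> 'M_n.+1.
  by rewrite expr2 scalar_mxM -rho_N1 -rhoM // -scalar_mxM mulN1r opprK rho_rep.1.
by move/matrixP/(_ 0 0); rewrite !mxE.
Qed.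

Lemma cube_e : e ^+ 3 = e.
Proof. by rewrite exprS sqr_e mulr1. Qed.

Lemma expr_e_odd k : e ^+ k = e ^+ odd k.
Proof. by rewrite -[in LHS](odd_double_half k) exprD -mul2n exprM sqr_e expr1n mulr1. Qed.

Lemma e_neq0 : e != 0.
Proof. by apply: contra_eq_neq sqr_e => ->; rewrite expr0n eq_sym oner_neq0. Qed.

Lemma rho_Smat_sqr : rho Smat ^+ 2 = e%:M.
Proof. by rewrite expr2 -mulmxE -rhoM ?Smat2. Qed.

Lemma rho_Rmat_cube : rho Rmat ^+ 3 = (e ^+ 3)%:M.
Proof.
rewrite cube_e !exprS expr0 mulr1 -!mulmxE mulmxA.
by rewrite -!rhoM ?Rmat3; auto.
Qed.

Lemma det_rho_Tmat : \det (rho Tmat) = \det (rho Smat) ^+ 3 * \det (rho Rmat).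
Proof.
rewrite Tmat_SR !rhoM ?det_mulmx; try by auto.
by rewrite !exprS expr0 mulr1 !mulrA.
Qed.

Lemma det_rho_Smat_sqr : \det (rho Smat) ^+ 2 = e ^+ n.+1.
Proof. by rewrite -[RHS]det_scalar -rho_Smat_sqr det_mxX. Qed.

Lemma det_rho_Rmat_cube : \det (rho Rmat) ^+ 3 = e ^+ n.+1.
Proof. by rewrite -cube_e -[RHS]det_scalar -rho_Rmat_cube det_mxX. Qed.

Lemma count_mem_spectra_SR (evS evR : seq R[i]) a b : (0 < n)%N ->
  spectrum_of (rho Smat) evS -> spectrum_of (rho Rmat) evR ->
  (count_mem a evS + count_mem b evR <= n.+1)%N.
Proof.
move=> n_gt0 [_ _ countS] [_ _ countR]; apply: leq_trans (leq_add (countS a) (countR b)) _.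
exact: rank_eigenspaces_irreducible irreducible_SR.
Qed.

Let uniq_sqrt_e : uniq [:: sqrtC e; - sqrtC e].
Proof. by apply: uniq_opp_roots; rewrite sqrtC_eq0 e_neq0. Qed.

Let uniq_cbrt_e : uniq [:: e; e * omega; e * omega ^+ 2].
Proof. exact: uniq_cube_roots e_neq0 omega_root. Qed.

Lemma det_rho_Rmat_dim3 : n = 2%N -> \det (rho Rmat) = e.
Proof.
move=> n2; have n_gt0 : (0 < n)%N by rewrite n2.
have [evS subS specS] := sqrt_spectrum e_neq0 rho_Smat_sqr.
have [evR subR specR] := cube_spectrum e_neq0 rho_Rmat_cube.
have [[sizeS _ _] [sizeR -> _]] := (specS, specR).
have [a _ S_a] : exists2 a, a \in [:: sqrtC e; - sqrtC e] & (1 < count_mem a evS)%N.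
  by apply: count_mem_pigeonhole => //; rewrite sizeS n2.
have R_le1 b : (count_mem b evR <= 1)%N.
  rewrite -(leq_add2l 2); apply: leq_trans (leq_add S_a (leqnn _)) _.
  by have := count_mem_spectra_SR a b n_gt0 specS specR; rewrite n2.
have R_eq1 := count_mem_saturated uniq_cbrt_e subR R_le1 (etrans sizeR (congr1 _ n2)).
rewrite -(prod_count_mem id uniq_cbrt_e subR) (eq_big_seq id) => [|x /R_eq1 ->];
  last exact: expr1.
rewrite !big_cons big_nil mulr1.
by transitivity (e ^+ 3 * omega ^+ 3); [ring | rewrite cube_e omega3 mulr1].
Qed.

Lemma det_rho_Smat_dim4 : n = 3%N -> \det (rho Smat) = 1.
Proof.
move=> n3; have n_gt0 : (0 < n)%N by rewrite n3.
have [evS subS specS] := sqrt_spectrum e_neq0 rho_Smat_sqr.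
have [evR subR specR] := cube_spectrum e_neq0 rho_Rmat_cube.
have [[sizeS -> _] [sizeR _ _]] := (specS, specR).
have [b _ R_b] :
    exists2 b, b \in [:: e; e * omega; e * omega ^+ 2] & (1 < count_mem b evR)%N.
  by apply: count_mem_pigeonhole => //; rewrite sizeR n3.
have S_le2 a : (count_mem a evS <= 2)%N.
  rewrite -(leq_add2r 2); apply: leq_trans (leq_add (leqnn _) R_b) _.
  by have := count_mem_spectra_SR a b n_gt0 specS specR; rewrite n3.
have S_eq2 := count_mem_saturated uniq_sqrt_e subS S_le2 (etrans sizeS (congr1 _ n3)).
rewrite -(prod_count_mem id uniq_sqrt_e subS) (eq_big_seq (fun x => x ^+ 2));
  last by move=> x /S_eq2 ->.
by rewrite !big_cons big_nil mulr1 -exprMn mulrN -expr2 sqrtCK sqrrN sqr_e.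
Qed.

Lemma det_rho_Tmat_pow : (n < 4)%N -> \det (rho Tmat) ^+ (12 %/ n.+1) = 1.
Proof.
rewrite det_rho_Tmat; set x := \det (rho Smat); set y := \det (rho Rmat) => n_lt4.
have x2 : x ^+ 2 = e ^+ n.+1 := det_rho_Smat_sqr.
have y3 : y ^+ 3 = e ^+ n.+1 := det_rho_Rmat_cube.
have [n0|[n1|[n2|n3]]] : (n = 0 \/ n = 1 \/ n = 2 \/ n = 3)%N by lia.
- rewrite n0 divn1 in x2 y3 *.
  transitivity ((x ^+ 2) ^+ 18 * (y ^+ 3) ^+ 4); first by ring.
  by rewrite x2 y3 -!exprM -exprD expr_e_odd.
- rewrite n1 (_ : 12 %/ 2 = 6)%N // in x2 y3 *.
  transitivity ((x ^+ 2) ^+ 9 * (y ^+ 3) ^+ 2); first by ring.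
  by rewrite x2 y3 -!exprM -exprD expr_e_odd.
- rewrite n2 (_ : 12 %/ 3 = 4)%N // in x2 y3 *.
  transitivity ((x ^+ 2) ^+ 6 * y ^+ 3 * y); first by ring.
  by rewrite x2 y3 (det_rho_Rmat_dim3 n2 : y = e) -!exprM -exprD -exprSr expr_e_odd.
- rewrite n3 (_ : 12 %/ 4 = 3)%N // in x2 y3 *.
  transitivity ((x ^+ 2) ^+ 4 * y ^+ 3 * x); first by ring.
  by rewrite x2 y3 (det_rho_Smat_dim4 n3 : x = 1) mulr1 -!exprM -exprD expr_e_odd.
Qed.

End Representation.

Theorem lemma4p1 (R : realType) (d : nat) (rho : 'M[int]_2 -> 'M[R[i]]_d)
  (r : 'I_d -> R) :
  is_rep rho -> irreducible_rep rho -> (d <= 4)%N ->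
  char_poly (rho Tmat) = \prod_(k < d) ('X - (ee (r k))%:P) ->
  exists m : int, 12 * (\sum_(k < d) r k) = m%:~R /\ (d%:Z %| m)%Z.
Proof.
move=> rho_rep rho_irr d_le4 charT.
case: d rho r rho_rep rho_irr d_le4 charT => [|n] rho r rho_rep rho_irr d_le4 charT.
  by case: rho_irr.
have [e rho_N1] := rho_N1_scalar rho_rep rho_irr.
have := det_rho_Tmat_pow rho_rep rho_irr rho_N1 d_le4.
rewrite (det_char_poly_roots charT) -ee_sum -eeMn => /ee_eq1[m sum_r].
exists (n.+1%:Z * m); split; last exact/dvdz_mulr/dvdzz.
have d_dvd12 : (n.+1 %| 12)%N by case: (n) d_le4 => [|[|[|[]]]].
by rewrite rmorphM /= -sum_r !pmulrn mulrnAr !mulr_natl -mulrnA mulnC divnK.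
Qed.
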